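(* Let $\widehat{\mathcal T}_\bullet$ be an arbitrary hierarchical mesh on $\widehat\Omega$. Then $\{\widehat\beta\in\widehat{\mathcal H}_\bullet:\widehat\beta|_{\partial\widehat\Omega}=0\}$ is a basis of $\widehat{\mathcal X}_\bullet:=\{\widehat V\in{\rm span}\,\widehat{\mathcal H}_\bullet:\widehat V|_{\partial\widehat\Omega}=0\}$.
   Context: Parameter domain $\widehat\Omega=(0,1)^d$, $d\ge2$. Fix degrees $p_1,\dots,p_d\ge1$. For each $i$ let $\widehat{\mathcal K}^0_i=(t^0_{i,j})_{j=0}^{N^0_i+p_i}$ be a nondecreasing vector in $[0,1]$ whose first $p_i+1$ entries are $0$, last $p_i+1$ entries are $1$, and whose interior knots have multiplicity $\le p_i$. $\widehat{\mathcal K}^{k+1}_i$ arises from $\widehat{\mathcal K}^k_i$ by inserting the midpoint of every nondegenerate knot span once. $\widehat{\mathcal B}^k$ denotes the tensor-product B-splines of degree $(p_1,\dots,p_d)$ for $\widehat{\mathcal K}^k$, and $\widehat{\mathcal T}^k$ the closed cells of level $k$. A hierarchical mesh is given by closed sets $[0,1]^d=\widehat\Omega^0_\bullet\supseteq\widehat\Omega^1_\bullet\supseteq\cdots$, each $\widehat\Omega^k_\bullet$ ($k\ge1$) a union of cells of $\widehat{\mathcal T}^{k-1}$, with $\widehat\Omega^M_\bullet=\emptyset$ for some $M$; its hierarchical basis is $\widehat{\mathcal H}_\bullet=\bigcup_k\{\widehat\beta\in\widehat{\mathcal B}^k:{\rm supp}\,\widehat\beta\subseteq\widehat\Omega^k_\bullet,\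 {\rm supp}\,\widehat\beta\not\subseteq\widehat\Omega^{k+1}_\bullet\}$ (a linearly independent set). *)

From HB Require Import structures.
From mathcomp Require Import all_boot all_order all_algebra.
Set Implicit Arguments. Unset Strict Implicit. Unset Printing Implicit Defensive.
Import Order.TTheory GRing.Theory Num.Theory.
Local Open Scope ring_scope.

Section HB_Defs.
Variable R : realFieldType.

Fixpoint refine_knots (s : seq R) : seq R :=
  match s with
  | a :: ((b :: _) as s') =>
      if a < b then a :: (a + b) / 2%:R :: refine_knots s' else a :: refine_knots s'
  | _ => s
  end.

(** Degree 0: indicator of [t_j, t_{j+1}), closed on the right when t_{j+1}
    is the last knot and t_j < t_{j+1} (standard convention giving the
    continuous B-splines on the closed interval [0,1]).
    Note: in MathComp x / 0 = 0, which is the usual convention 0/0 := 0. *)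
Fixpoint bspline (t : seq R) (p j : nat) (x : R) : R :=
  match p with
  | 0 =>
      let a := nth 0 t j in let b := nth 0 t j.+1 in
      if (a <= x) && (x < b) then 1
      else if [&& a < b, b == last 0 t & x == b] then 1 else 0
  | q.+1 =>
      (x - nth 0 t j) / (nth 0 t (j + q.+1) - nth 0 t j) * bspline t q j x
    + (nth 0 t (j + q.+2) - x) / (nth 0 t (j + q.+2) - nth 0 t j.+1)
        * bspline t q j.+1 x
  end.

Definition nbs (t : seq R) (p : nat) : nat := (size t - p - 1)%N.

Definition open_knot_vector (p N : nat) (t : seq R) : Prop :=
  [/\ size t = (N + p).+1,
      sorted <=%R t,
      forall j, (j <= p)%N -> nth 0 t j = 0,
      forall j, (j <= p)%N -> nth 0 t (N + j) = 1
    & forall j, (p < j)%N -> (j < N)%N -> leq (count_mem (nth 0%R t j) t) p].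

Variable d : nat.

Definition Kk (K0 : 'I_d -> seq R) (k : nat) (i : 'I_d) : seq R :=
  iter k refine_knots (K0 i).

Definition tbspline (K : 'I_d -> seq R) (p j : 'I_d -> nat) (x : 'I_d -> R) : R :=
  \prod_(i < d) bspline (K i) (p i) (j i) (x i).

Definition idx := (nat * {ffun 'I_d -> nat})%type.

Definition beta (K0 : 'I_d -> seq R) (p : 'I_d -> nat) (a : idx) : ('I_d -> R) -> R :=
  tbspline (Kk K0 a.1) p a.2.

Definition in_supp (f : ('I_d -> R) -> R) (x : 'I_d -> R) : Prop :=
  forall e : R, 0 < e -> exists y : 'I_d -> R, (forall i, `|y i - x i| < e) /\ f y != 0.

Definition is_cell (t : 'I_d -> seq R) (c : 'I_d -> nat) : Prop :=
  forall i, ((c i).+1 < size (t i))%N /\ nth 0 (t i) (c i) < nth 0 (t i) (c i).+1.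

Definition in_cell (t : 'I_d -> seq R) (c : 'I_d -> nat) (x : 'I_d -> R) : Prop :=
  forall i, nth 0 (t i) (c i) <= x i <= nth 0 (t i) (c i).+1.

Definition unit_cube (x : 'I_d -> R) : Prop := forall i, 0 <= x i <= 1.

Definition hier_mesh (K0 : 'I_d -> seq R) (Om : nat -> ('I_d -> R) -> Prop) : Prop :=
  [/\ forall x, Om 0%N x <-> unit_cube x,
      forall k x, Om k.+1 x -> Om k x,
      forall k, exists S : ('I_d -> nat) -> Prop,
        (forall c, S c -> is_cell (Kk K0 k) c) /\
        (forall x, Om k.+1 x <-> exists c, S c /\ in_cell (Kk K0 k) c x)
    & exists M, forall x, ~ Om M x].

Definition in_H (K0 : 'I_d -> seq R) (p : 'I_d -> nat) (Om : nat -> ('I_d -> R) -> Prop)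
    (a : idx) : Prop :=
  [/\ forall i, (a.2 i < nbs (Kk K0 a.1 i) (p i))%N,
      forall x, in_supp (beta K0 p a) x -> Om a.1 x
    & ~ (forall x, in_supp (beta K0 p a) x -> Om a.1.+1 x)].

Definition on_boundary (x : 'I_d -> R) : Prop :=
  unit_cube x /\ exists i, x i = 0 \/ x i = 1.

Definition vanish_bdry (f : ('I_d -> R) -> R) : Prop :=
  forall x, on_boundary x -> f x = 0.

(** Linear algebra of function families, functions compared on closed [0,1]^d. *)
Definition lin_comb (s : seq idx) (c : idx -> R) (F : idx -> ('I_d -> R) -> R)
    (x : 'I_d -> R) : R := \sum_(a <- s) c a * F a x.

Definition in_span (P : idx -> Prop) (F : idx -> ('I_d -> R) -> R)
    (V : ('I_d -> R) -> R) : Prop :=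
  exists (s : seq idx) (c : idx -> R),
    (forall a, a \in s -> P a) /\ forall x, unit_cube x -> V x = lin_comb s c F x.

Definition lin_indep (P : idx -> Prop) (F : idx -> ('I_d -> R) -> R) : Prop :=
  forall (s : seq idx) (c : idx -> R), uniq s -> (forall a, a \in s -> P a) ->
    (forall x, unit_cube x -> lin_comb s c F x = 0) -> forall a, a \in s -> c a = 0.

Definition is_basis_of (P : idx -> Prop) (F : idx -> ('I_d -> R) -> R)
    (X : (('I_d -> R) -> R) -> Prop) : Prop :=
  [/\ forall a, P a -> X (F a), lin_indep P F & forall V, X V -> in_span P F V].

End HB_Defs.

From HB Require Import structures.
From mathcomp Require Import all_boot all_order all_algebra.
From mathcomp Require Import zify ring lra.
From Stdlib Require Import Classical ClassicalEpsilon.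
Set Implicit Arguments. Unset Strict Implicit. Unset Printing Implicit Defensive.
Import Order.TTheory GRing.Theory Num.Theory.
Local Open Scope ring_scope.

(* Every function of H vanishing on the boundary lies in X, and H itself is
   linearly independent: at the lowest level k carrying a nonzero coefficient,
   an open cell of level k inside the support of the corresponding function but
   outside Om (k+1) meets only level-k tensor B-splines, and these are locally
   linearly independent (by the Marsden identity, their values at p+1 points of
   a span form an invertible matrix).
   For the spanning property, write V in X as a combination of H and consider
   the lowest level k at which some function not vanishing on the boundary has a
   nonzero coefficient.  On a face x_i = 0 (or 1) where it is nonzero, a single
   level-k B-spline in direction i survives, and the same local independence in
   the other d-1 directions, together with V = 0 on that face, forces the
   coefficient to vanish. *)

Section Knots.
Variable R : realFieldType.
Implicit Types (t s : seq R).

(* The invariant preserved by dyadic refinement. *)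
Definition clamped (p : nat) t : Prop :=
  [/\ sorted <=%R t, all (fun x : R => 0 <= x <= 1) t,
      exists r, t = nseq p.+1 0 ++ r & exists l, t = l ++ nseq p.+1 1].

Lemma refine_knots_cons a s : exists s', refine_knots (a :: s) = a :: s'.
Proof. case: s => [|b s] /=; first by exists [::]. by case: ifP => _; eexists. Qed.

Lemma refine_knots_cons2 (a b : R) s : refine_knots [:: a, b & s] =
  if a < b then [:: a, (a + b) / 2 & refine_knots (b :: s)] else a :: refine_knots (b :: s).
Proof. by []. Qed.

Lemma refine_knots_nseq n (c : R) : refine_knots (nseq n c) = nseq n c.
Proof.
by elim: n => [|[|n] IH] //; rewrite [nseq _ _]/= /= ltxx; congr (_ :: _).
Qed.

Lemma refine_knots_nseq_cat n (c : R) r :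
  exists r', refine_knots (nseq n.+1 c ++ r) = nseq n.+1 c ++ r'.
Proof.
elim: n => [|n [r' IH]]; first exact: refine_knots_cons.
by exists r'; move: IH => /= IH; rewrite ltxx IH.
Qed.

Lemma refine_knots_cat_nseq n (c : R) l :
  exists l', refine_knots (l ++ nseq n.+1 c) = l' ++ nseq n.+1 c.
Proof.
elim: l => [|a l [l' IH]]; first by exists [::]; rewrite refine_knots_nseq.
rewrite cat_cons; case Hs: (l ++ nseq n.+1 c) => [|b s]; first by case: (l) Hs.
rewrite refine_knots_cons2 -Hs IH.
by case: ifP => _; [exists [:: a, (a + b) / 2 & l'] | exists (a :: l')].
Qed.

Lemma refine_knots_sorted t : sorted <=%R t -> sorted <=%R (refine_knots t).
Proof.
case: t => // a s; elim: s a => [|b s IH] a //.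
rewrite /sorted [path _ _ _]/= refine_knots_cons2 => /andP[hab /IH].
have [s' ->] := refine_knots_cons b s => hs.
by case: ifP => hlt /=; rewrite ?hab ?midf_le.
Qed.

Lemma refine_knots_all (P : pred R) t :
  (forall a b, P a -> P b -> a < b -> P ((a + b) / 2)) ->
  all P t -> all P (refine_knots t).
Proof.
move=> HP; case: t => // a s; elim: s a => [|b s IH] a //.
rewrite refine_knots_cons2 /=; case/and3P=> ha hb hs.
have /= := IH b; rewrite hb hs => /(_ isT) IH'.
by case: ifP => hlt /=; rewrite ha ?HP.
Qed.

Lemma refine_knots_clamped p t : clamped p t -> clamped p (refine_knots t).
Proof.
case=> hs ha [r hr] [l hl]; split.
- exact: refine_knots_sorted.
- apply: refine_knots_all ha => a b /andP[a0 a1] /andP[b0 b1] ab.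
  have [la lb] := midf_le (ltW ab).
  by rewrite (le_trans a0 la) (le_trans lb b1).
- by rewrite hr; exact: refine_knots_nseq_cat.
- by rewrite hl; exact: refine_knots_cat_nseq.
Qed.

Lemma iter_refine_knots_clamped p t k :
  clamped p t -> clamped p (iter k (@refine_knots R) t).
Proof. by move=> h; elim: k => //= k IH; exact: refine_knots_clamped. Qed.

Lemma open_knot_vector_clamped p N t : open_knot_vector p N t -> clamped p t.
Proof.
case=> hsz hs h0 h1 _.
have hle i j : (i <= j)%N -> (j < size t)%N -> nth 0 t i <= nth 0 t j.
  move=> ij js; apply: (sorted_leq_nth le_trans lexx) => //.
  by rewrite inE; apply: leq_ltn_trans js.
split => //.
- apply/(all_nthP 0) => i hi; rewrite hsz in hi.
  apply/andP; split; first by have := hle 0%N i (leq0n _); rewrite h0 // hsz; apply.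
  by have := hle i (N + p)%N; rewrite h1 // hsz; apply; lia.
- exists (drop p.+1 t); rewrite -{1}(cat_take_drop p.+1 t); congr (_ ++ _).
  have hst : size (take p.+1 t) = p.+1 by rewrite size_takel // hsz; lia.
  apply: (@eq_from_nth _ 0); first by rewrite hst size_nseq.
  by move=> i; rewrite hst => hi; rewrite nth_take // nth_nseq hi h0.
- exists (take N t); rewrite -{1}(cat_take_drop N t); congr (_ ++ _).
  apply: (@eq_from_nth _ 0); first by rewrite size_drop size_nseq hsz; lia.
  move=> i; rewrite size_drop hsz => hi.
  by rewrite nth_drop nth_nseq ifT; [rewrite h1 //; lia | lia].
Qed.

Section Clamped.
Variables (p : nat) (t : seq R).
Hypothesis ht : clamped p t.
Local Notation T j := (nth 0 t j).

Lemma clamped_nth_le i j : (i <= j)%N -> (j < size t)%N -> T i <= T j.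
Proof.
case: ht => hs _ _ _ ij js; apply: (sorted_leq_nth le_trans lexx) => //.
by rewrite inE; apply: leq_ltn_trans js.
Qed.

Lemma clamped_nth_ge0 j : 0 <= T j.
Proof.
case: ht => _ ha _ _; case: (ltnP j (size t)) => hj; last by rewrite nth_default.
by have /andP[] := all_nthP 0 ha j hj.
Qed.

Lemma clamped_nth_le1 j : T j <= 1.
Proof.
case: ht => _ ha _ _; case: (ltnP j (size t)) => hj; last by rewrite nth_default.
by have /andP[] := all_nthP 0 ha j hj.
Qed.

Lemma clamped_nth_head j : (j <= p)%N -> T j = 0.
Proof. by case: ht => _ _ [r ->] _ hj; rewrite nth_cat size_nseq ltnS hj nth_nseq ltnS hj. Qed.

Lemma clamped_nth_tail j : (size t - p.+1 <= j)%N -> (j < size t)%N -> T j = 1.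
Proof.
case: ht => _ _ _ [l hl]; rewrite hl size_cat size_nseq addnK => h1 h2.
rewrite nth_cat ltnNge h1 nth_nseq ifT //.
by move: (size l) h1 h2 => n; lia.
Qed.

Lemma clamped_span_range m : (m.+1 < size t)%N -> T m < T m.+1 ->
  (p <= m)%N /\ (m + p.+1 < size t)%N.
Proof.
move=> hm hlt; split.
  rewrite leqNgt; apply/negP => hmp.
  by move: hlt; rewrite !clamped_nth_head ?ltxx //; lia.
rewrite ltnNge; apply/negP => hmp.
by move: hlt; rewrite !clamped_nth_tail ?ltxx //; lia.
Qed.

End Clamped.
End Knots.

Section BSpline.
Variable R : realFieldType.
Variables (p : nat) (t : seq R).
Hypothesis ht : clamped p t.
Local Notation T j := (nth 0 t j).
Implicit Types (x y : R) (j m q : nat).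

Lemma bsplineS q j x : bspline t q.+1 j x =
  (x - T j) / (T (j + q.+1) - T j) * bspline t q j x
  + (T (j + q.+2) - x) / (T (j + q.+2) - T j.+1) * bspline t q j.+1 x.
Proof. by []. Qed.

Lemma bspline0_neq0 j x : bspline t 0 j x != 0 ->
  (T j <= x < T j.+1) \/ (T j < T j.+1 /\ x = T j.+1).
Proof.
rewrite /=; case: ifP => [h _|_]; first by left.
by case: ifP => [/and3P[h1 _ /eqP h3] _|_]; [right | rewrite eqxx].
Qed.

Lemma bspline0_span m x : T m <= x < T m.+1 -> bspline t 0 m x = 1.
Proof. by move=> h /=; rewrite h. Qed.

Lemma bsplineS_neq0 q j x : bspline t q.+1 j x != 0 ->
  ((x - T j) / (T (j + q.+1) - T j) != 0 /\ bspline t q j x != 0) \/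
  ((T (j + q.+2) - x) / (T (j + q.+2) - T j.+1) != 0 /\ bspline t q j.+1 x != 0).
Proof.
rewrite bsplineS; set a := _ * _; set b := _ * _.
have [ha|ha] := eqVneq a 0.
  by rewrite ha add0r /b mulf_eq0 negb_or => /andP hb; right.
by move=> _; left; move: ha; rewrite /a mulf_eq0 negb_or => /andP.
Qed.

Lemma bspline_active m x q j : (m.+1 < size t)%N -> T m < x < T m.+1 ->
  bspline t q j x != 0 -> (j <= m)%N /\ (m <= j + q)%N.
Proof.
move=> hm /andP[xl xr]; elim: q j => [|q IH] j; last first.
  by case/bsplineS_neq0 => [[_ /IH [h1 h2]]|[_ /IH [h1 h2]]]; split; lia.
case/bspline0_neq0 => [/andP[h1 h2]|[h1 h2]].
- case: (ltnP j m) => jm.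
    have h : T j.+1 <= T m.
      case: (ltnP j.+1 (size t)) => hj1; first by apply: (clamped_nth_le ht); lia.
      by rewrite nth_default // (clamped_nth_ge0 ht).
    by have := lt_le_trans xl (le_trans (ltW h2) h); rewrite ltxx.
  case: (ltnP m j) => mj; last by split; lia.
  case: (ltnP j (size t)) => hj.
    have h : T m.+1 <= T j by apply: (clamped_nth_le ht).
    by have := lt_le_trans xr (le_trans h h1); rewrite ltxx.
  move: h2; rewrite nth_default; last exact: leqW hj.
  by move=> h2; have := lt_trans (le_lt_trans (clamped_nth_ge0 ht m) xl) h2; rewrite ltxx.
- exfalso; subst x; case: (ltnP j.+1 (size t)) => hj1; last first.
    move: xl; rewrite (nth_default _ hj1) => xl.
    by have := le_lt_trans (clamped_nth_ge0 ht m) xl; rewrite ltxx.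
  case: (ltnP j m) => jm.
    by have := lt_le_trans xl (clamped_nth_le ht jm (ltnW hm)); rewrite ltxx.
  have := clamped_nth_le ht (i := m.+1) (j := j.+1); rewrite ltnS => /(_ jm hj1) h.
  by have := lt_le_trans xr h; rewrite ltxx.
Qed.

Lemma bspline_support q j y : (j + q.+1 < size t)%N -> bspline t q j y != 0 ->
  [/\ T j <= y, y <= T (j + q.+1) & T j < T (j + q.+1)].
Proof.
elim: q j => [|q IH] j hj.
  rewrite addn1; case/bspline0_neq0 => [/andP[h1 h2]|[h1 ->]].
    by split => //; [apply: ltW | apply: le_lt_trans h2].
  by split => //; apply: ltW.
case/bsplineS_neq0 => [[_ /IH]|[_ /IH]].
  case=> [|h1 h2 h3]; first lia.
  have h : T (j + q.+1) <= T (j + q.+2) by apply: (clamped_nth_le ht); lia.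
  by split => //; [apply: le_trans h | apply: lt_le_trans h].
case=> [|]; first lia.
rewrite -!addSnnS => h1 h2 h3.
have h : T j <= T j.+1 by apply: (clamped_nth_le ht); lia.
by split => //; [apply: le_trans h1 | apply: le_lt_trans h3].
Qed.

Lemma bspline_neq0_at0 q j : (j + q.+1 < size t)%N -> bspline t q j 0 != 0 ->
  T (j + q) <= 0 < T (j + q).+1.
Proof.
elim: q j => [|q IH] j hj.
  rewrite addn0; case/bspline0_neq0 => [//|[h1 h2]]; exfalso.
  by have := le_lt_trans (clamped_nth_ge0 ht j) h1; rewrite -h2 ltxx.
case/bsplineS_neq0 => [[hc hb]|[_ hb]]; last first.
  by have := IH j.+1 _ hb; rewrite !addSnnS; apply; lia.
have /andP[h1 h2] := IH j ltac:(lia) hb; exfalso; move: hc.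
have -> : T j = 0.
  apply/le_anti; rewrite (clamped_nth_ge0 ht) andbT; apply: le_trans h1.
  by apply: (clamped_nth_le ht); lia.
by rewrite subrr mul0r eqxx.
Qed.

Lemma bspline_neq0_at1 q j : (j + q.+1 < size t)%N -> bspline t q j 1 != 0 ->
  T j < T j.+1 /\ T j.+1 = 1.
Proof.
elim: q j => [|q IH] j hj.
  case/bspline0_neq0 => [/andP[h1 h2]|[h1 h2]]; last by split.
  exfalso; have := lt_le_trans h2 (clamped_nth_le1 ht j.+1).
  by rewrite ltxx.
case/bsplineS_neq0 => [[_ hb]|[hc hb]]; first by apply: IH hb; lia.
have [h1 h2] := IH j.+1 ltac:(lia) hb; exfalso; move: hc.
have -> : T (j + q.+2) = 1.
  by apply/le_anti; rewrite (clamped_nth_le1 ht) /= -h2; apply: (clamped_nth_le ht); lia.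
by rewrite subrr mul0r eqxx.
Qed.

End BSpline.

Section ShiftedPowers.
Variable R : realFieldType.

Lemma det_Vandermonde_neq0 n (a : 'rV[R]_n) :
  injective (a 0) -> \det (Vandermonde n a) != 0.
Proof.
move=> inj_a; rewrite det_Vandermonde; apply/prodf_neq0 => i _.
apply/prodf_neq0 => j hij; rewrite subr_eq0; apply/eqP => /inj_a eji.
by move: hij; rewrite eji ltnn.
Qed.

(* Via the binomial theorem, the matrix factors as (diagonal) x (transposed
   Vandermonde in the 1 / y k) x (diagonal of binomials) x (Vandermonde in the - x l). *)
Lemma det_shifted_powers_neq0 n (x y : 'I_n.+1 -> R) :
  injective x -> injective y -> (forall k, y k != 0) ->
  \det (\matrix_(k, l) (y k - x l) ^+ n) != 0.
Proof.
move=> inj_x inj_y y0.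
pose A := \matrix_(k, r < n.+1) (y k ^+ (n - r) *+ 'C(n, r)).
pose V := Vandermonde n.+1 (\row_l (- x l)).
have -> : \matrix_(k, l) (y k - x l) ^+ n = A *m V.
  apply/matrixP => k l; rewrite !mxE exprDn.
  by apply: eq_bigr => r _; rewrite !mxE mulrnAl.
have -> : A = diag_mx (\row_k y k ^+ n) *m (Vandermonde n.+1 (\row_k (y k)^-1))^T
              *m diag_mx (\row_r 'C(n, r)%:R).
  rewrite mul_mx_diag mul_diag_mx; apply/matrixP => k r; rewrite !mxE.
  by rewrite exprB ?unitfE ?exprVn ?mulr_natr // -ltnS.
rewrite !det_mulmx !det_diag det_tr !mulf_neq0 ?det_Vandermonde_neq0 //.
- by apply/prodf_neq0 => k _; rewrite mxE expf_neq0.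
- by move=> k k'; rewrite !mxE => /invr_inj /inj_y.
- by apply/prodf_neq0 => r _; rewrite mxE pnatr_eq0 -lt0n bin_gt0 -ltnS ltn_ord.
- by move=> l l'; rewrite !mxE => /oppr_inj /inj_x.
Qed.

Lemma exists_points_between n (a b : R) : a < b ->
  exists x : 'I_n -> R, injective x /\ forall l, a < x l < b.
Proof.
move=> ab; set h := b - a; have h0 : 0 < h by rewrite subr_gt0.
exists (fun l => a + h * (l.+1%:R / n.+1%:R)); split.
  move=> l l' /addrI /(mulfI (lt0r_neq0 h0)).
  move/(mulIf (invr_neq0 (lt0r_neq0 (ltr0Sn R n)))) => /eqP.
  by rewrite eqr_nat eqSS => /eqP /val_inj.
move=> l; have f0 : 0 < l.+1%:R / n.+1%:R :> R by rewrite divr_gt0 ?ltr0n.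
have f1 : l.+1%:R / n.+1%:R < 1 :> R by rewrite ltr_pdivrMr ?ltr0n // mul1r ltr_nat ltnS.
by rewrite ltrDl mulr_gt0 //= -ltrBrDl gtr_pMr.
Qed.

End ShiftedPowers.

Lemma big_ord_tail (V : zmodType) (n m : nat) (F : nat -> V) :
  (n <= m)%N -> (forall j, (j < m - n)%N -> F j = 0) ->
  \sum_(j < m.+1) F j = \sum_(r < n.+1) F (m - n + r)%N.
Proof.
move=> hnm hF; rewrite -(big_mkord xpredT F) (@big_cat_nat _ _ _ (m - n)) //=; last lia.
rewrite big_nat_cond big1 ?add0r; last by move=> j /andP[/andP[_ /hF]].
rewrite -{1}[(m - n)%N]add0n big_addn.
have -> : (m.+1 - (m - n) = n.+1)%N by lia.
by rewrite big_mkord; apply: eq_bigr => i _; rewrite addnC.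
Qed.

Section Marsden.
Variable R : realFieldType.
Variables (p : nat) (t : seq R).
Hypothesis ht : clamped p t.
Local Notation T j := (nth 0 t j).
Implicit Types (x y : R) (j m q : nat).

Definition marsden_coef (j q : nat) (y : R) : R := \prod_(i < q) (y - T (j + i).+1).

Lemma marsden_coefS j q y :
  marsden_coef j q.+1 y = (y - T j.+1) * marsden_coef j.+1 q y.
Proof.
rewrite /marsden_coef big_ord_recl /= addn0; congr (_ * _).
by apply: eq_bigr => i _; rewrite /bump /= add1n addnS addSn.
Qed.

Lemma marsden_identity m x q y : (m.+1 < size t)%N -> T m < x < T m.+1 ->
  (q <= m)%N -> (m + q.+1 < size t)%N ->
  (y - x) ^+ q = \sum_(j < m.+1) marsden_coef j q y * bspline t q j x.
Proof.
move=> hm hx; have inactive q' j : (j < m - q' \/ m < j)%N -> bspline t q' j x = 0.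
  move=> hj; apply/eqP; apply: contraT => /(bspline_active ht hm hx) []; lia.
elim: q => [|q IH] hqm hmq.
  rewrite expr0 big_ord_recr big1 ?add0r => [|[j hj] _]; last first.
    by rewrite inactive ?mulr0 //=; lia.
  rewrite /marsden_coef big_ord0 mul1r bspline0_span /= ?add0r //.
  by case/andP: hx => xl ->; rewrite (ltW xl).
rewrite exprS IH; [|lia|lia]; rewrite mulr_sumr; symmetry.
under eq_bigr do rewrite bsplineS mulrDr.
rewrite big_split /= [X in X + _ = _]big_ord_recl [X in _ + X = _]big_ord_recr /=.
rewrite [RHS]big_ord_recl /= !inactive ?mulr0 ?add0r ?addr0 -?big_split /=; [|lia|lia].
apply: eq_bigr => [[j hj]] _ /=; rewrite /bump /= add1n.
have [->|hb] := eqVneq (bspline t q j.+1 x) 0; first by rewrite !mulr0 addr0.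
have [h1 h2] := bspline_active ht hm hx hb.
have -> : marsden_coef j.+1 q.+1 y = marsden_coef j.+1 q y * (y - T (j.+1 + q).+1).
  by rewrite /marsden_coef big_ord_recr.
rewrite marsden_coefS ?addSn ?addnS.
have hD : T (j + q).+2 - T j.+1 != 0.
  rewrite subr_eq0; apply/eqP => he; case/andP: hx => xl xr.
  have e1 : T j.+1 <= T m by apply: (clamped_nth_le ht); lia.
  have e2 : T m.+1 <= T (j + q).+2 by apply: (clamped_nth_le ht); lia.
  by have := lt_le_trans (le_lt_trans e1 xl) (le_trans (ltW xr) e2); rewrite he ltxx.
rewrite !mulrA -!mulrDl; congr (_ * _); field.
exact: hD.
Qed.

(* Sampling at p + 1 points of the span, the Marsden identity factors the
   invertible matrix of shifted powers through the matrix of B-spline values. *)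
Lemma bspline_local_lin_indep m (c : nat -> R) : (m.+1 < size t)%N -> T m < T m.+1 ->
  (forall x, T m < x < T m.+1 -> \sum_(r < p.+1) c r * bspline t p (m - p + r) x = 0) ->
  forall r, (r < p.+1)%N -> c r = 0.
Proof.
move=> hm hlt hc; have [hpm hmp] := clamped_span_range ht hm hlt.
have [xs [inj_xs xs_in]] := exists_points_between p.+1 hlt.
pose ys (k : 'I_p.+1) : R := k.+1%:R.
pose E := \matrix_(r < p.+1, l < p.+1) bspline t p (m - p + r) (xs l).
pose Ps := \matrix_(k < p.+1, r < p.+1) marsden_coef (m - p + r) p (ys k).
have hW : \matrix_(k, l) (ys k - xs l) ^+ p = Ps *m E.
  apply/matrixP => k l; rewrite !mxE (marsden_identity _ _ (xs_in l)) //.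
  pose F j := marsden_coef j p (ys k) * bspline t p j (xs l).
  rewrite (big_ord_tail (n := p) (F := F)) //.
    by apply: eq_bigr => r _; rewrite !mxE.
  move=> j hj; apply/eqP; rewrite mulf_eq0; apply/orP; right; apply/eqP/eqP.
  by apply: contraT => /(bspline_active ht hm (xs_in l)) []; lia.
have hdE : \det E != 0.
  have : \det (\matrix_(k, l) (ys k - xs l) ^+ p) != 0.
    apply: det_shifted_powers_neq0 => // [k k' /eqP|k]; last by rewrite pnatr_eq0.
    by rewrite eqr_nat eqSS => /eqP /val_inj.
  by rewrite hW det_mulmx mulf_eq0 negb_or => /andP[].
have c0 : \row_r c r = 0 :> 'rV_p.+1.
  apply/eqP; apply: contraNT hdE => hne; apply/det0P; exists (\row_r c r) => //.
  apply/rowP => l; rewrite !mxE -[RHS](hc _ (xs_in l)).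
  by apply: eq_bigr => r _; rewrite !mxE.
by move=> r hr; have /rowP/(_ (Ordinal hr)) := c0; rewrite !mxE.
Qed.

End Marsden.

Lemma sum_bspline_regroup (R : realFieldType) (p : nat) (t : seq R) (ht : clamped p t)
    m (x : R) (J : Type) (s : seq J) (g : J -> nat) (F : J -> R) :
  (m.+1 < size t)%N -> nth 0 t m < x < nth 0 t m.+1 -> (p <= m)%N ->
  \sum_(r < p.+1) (\sum_(j <- s | g j == (m - p + r)%N) F j) * bspline t p (m - p + r) x
  = \sum_(j <- s) F j * bspline t p (g j) x.
Proof.
move=> hm hx hpm.
transitivity (\sum_(r < p.+1) \sum_(j <- s)
    (if g j == (m - p + r)%N then F j * bspline t p (g j) x else 0)).
  apply: eq_bigr => r _; rewrite mulr_suml big_mkcond; apply: eq_bigr => j _.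
  by case: eqP => [->|].
rewrite exchange_big; apply: eq_bigr => j _ /=.
case: (boolP ((m - p <= g j) && (g j <= m))%N) => hj.
  have hr : (g j - (m - p) < p.+1)%N by lia.
  rewrite (bigD1 (Ordinal hr)) //= ifT; last by apply/eqP; lia.
  rewrite big1 ?addr0 // => r hr'; case: eqP => // hE; exfalso.
  by move: hr' => /eqP; apply; apply: val_inj => /=; lia.
rewrite big1 => [|r _]; last first.
  case: eqP => // hE; have hr := ltn_ord r.
  by case/negP: hj; apply/andP; split; lia.
apply/esym/eqP; rewrite mulf_eq0; apply/orP; right; apply/eqP/eqP.
apply: contraT => /(bspline_active ht hm hx) [h1 h2].
by case/negP: hj; apply/andP; split; lia.
Qed.

Section TensorLocal.
Variable R : realFieldType.
Variables (d : nat) (K : 'I_d -> seq R) (p : 'I_d -> nat).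
Hypothesis hK : forall i, clamped (p i) (K i).

Definition partial_tbspline (L : seq 'I_d) (j : {ffun 'I_d -> nat}) (w : 'I_d -> R) : R :=
  \prod_(i <- L) bspline (K i) (p i) (j i) (w i).

Definition in_open_cell (L : seq 'I_d) (m : 'I_d -> nat) (w : 'I_d -> R) :=
  forall i, i \in L -> nth 0 (K i) (m i) < w i < nth 0 (K i) (m i).+1.

(* Induction on the coordinates: expanding in the first one, its univariate
   local independence kills every block of indices sharing a first entry. *)
Lemma tensor_local_lin_indep (L : seq 'I_d) (m : 'I_d -> nat) (J : Type) (s : seq J)
    (g : J -> {ffun 'I_d -> nat}) (c : J -> R) :
  uniq L ->
  (forall i, i \in L ->
     ((m i).+1 < size (K i))%N /\ nth 0 (K i) (m i) < nth 0 (K i) (m i).+1) ->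
  (forall w, in_open_cell L m w -> \sum_(j <- s) c j * partial_tbspline L (g j) w = 0) ->
  forall j0, (forall i, i \in L -> (j0 i <= m i)%N /\ (m i <= j0 i + p i)%N) ->
  \sum_(j <- s | all (fun i => g j i == j0 i) L) c j = 0.
Proof.
elim: L s => [|i0 L IH] s uL hm hs j0 hj0.
  have := hs (fun _ => 0) (fun i (hi : i \in [::]) => ltac:(by [])).
  by under eq_bigr do rewrite /partial_tbspline big_nil mulr1.
case/andP: uL => i0L uL; have [hm0 hlt0] := hm i0 (mem_head _ _).
have [hP hMP] := clamped_span_range (hK i0) hm0 hlt0.
set M := m i0; set P := p i0.
have block r : (r < P.+1)%N -> forall w, in_open_cell L m w ->
    \sum_(j <- s | g j i0 == (M - P + r)%N) c j * partial_tbspline L (g j) w = 0.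
  move=> hr w hw.
  pose cr r := \sum_(j <- s | g j i0 == (M - P + r)%N) c j * partial_tbspline L (g j) w.
  apply: (bspline_local_lin_indep (c := cr) (hK i0) hm0 hlt0 _ hr) => x hx.
  rewrite /cr (sum_bspline_regroup (hK i0) s (fun j => g j i0)) //.
  pose w' i := if i == i0 then x else w i.
  have w'E j : partial_tbspline L (g j) w' = partial_tbspline L (g j) w.
    apply: eq_big_seq => i hi; rewrite /w' ifN //.
    by apply: contraNneq i0L => <-.
  rewrite -[RHS](hs w'); last first.
    move=> i; rewrite inE => /orP[/eqP ->|hi]; rewrite /w' ?eqxx //.
    by case: eqP => [e|_]; [move: i0L; rewrite -e hi | exact: hw].
  apply: eq_bigr => j _.
  rewrite /partial_tbspline big_cons -/(partial_tbspline L (g j) w') w'E /w' eqxx.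
  by rewrite -/(partial_tbspline L (g j) w); ring.
set r0 := (j0 i0 - (M - P))%N.
have [hj1 hj2] := hj0 i0 (mem_head _ _).
have e0 : (M - P + r0)%N = j0 i0 by rewrite /r0; lia.
rewrite -[RHS](IH [seq j <- s | g j i0 == j0 i0] uL _ _ j0) ?big_filter_cond.
- by apply: eq_bigl => j.
- by move=> i hi; apply: hm; rewrite inE hi orbT.
- by move=> w hw; rewrite big_filter -e0; apply: block => //; rewrite /r0; lia.
- by move=> i hi; apply: hj0; rewrite inE hi orbT.
Qed.

End TensorLocal.

Section Coefficients.
Variable R : realFieldType.

Lemma big_pred1_uniq (T : eqType) (s : seq T) (a : T) (F : T -> R) :
  uniq s -> a \in s -> \sum_(b <- s | b == a) F b = F a.
Proof.
move=> us ha; rewrite (big_rem a) // eqxx big1_seq /= ?addr0 // => b /andP[/eqP -> ].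
by rewrite mem_rem_uniqF.
Qed.

Definition coef_of (T : eqType) (s : seq T) (c : T -> R) (a : T) : R :=
  \sum_(b <- s | b == a) c b.

Lemma coef_of_uniq (T : eqType) (s : seq T) (c : T -> R) a :
  uniq s -> a \in s -> coef_of s c a = c a.
Proof. exact: big_pred1_uniq. Qed.

Lemma big_undup_coef (T : eqType) (s : seq T) (P : pred T) (c F : T -> R) :
  \sum_(b <- s | P b) c b * F b = \sum_(a <- undup s | P a) coef_of s c a * F a.
Proof.
transitivity (\sum_(a <- undup s | P a) \sum_(b <- s | b == a) c b * F b); last first.
  by apply: eq_bigr => a _; rewrite mulr_suml; apply: eq_bigr => b /eqP ->.
rewrite (exchange_big_dep P) /= => [|a b ha /eqP -> //].
rewrite big_seq_cond [RHS]big_seq_cond; apply: eq_bigr => b /andP[hb hP].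
rewrite (eq_bigl (fun a => a == b)) ?big_pred1_uniq ?undup_uniq ?mem_undup // => a.
by rewrite [b == a]eq_sym; case: eqP => [->|]; rewrite ?hP ?andbF.
Qed.

Lemma big_cond_coef_of (T : eqType) (s : seq T) (Q : pred T)
    (c G : T -> R) a :
  Q a -> (forall b, b \in s -> Q b -> G b != 0 -> b = a) ->
  \sum_(b <- s | Q b) c b * G b = coef_of s c a * G a.
Proof.
move=> Qa hQ; rewrite /coef_of mulr_suml big_mkcond [RHS]big_mkcond /=.
apply: eq_big_seq => b hb; case: (eqVneq b a) => [->|hba]; first by rewrite Qa.
case: ifP => // Qb; have [->|/(hQ b hb Qb) eba] := eqVneq (G b) 0; first by rewrite mulr0.
by rewrite eba eqxx in hba.
Qed.

End Coefficients.

Section Spans.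
Variable R : realFieldType.
Variables (p : nat) (t : seq R).
Hypothesis ht : clamped p t.
Local Notation T j := (nth 0 t j).
Implicit Types (v z : R) (a c j m n : nat).

Lemma exists_span_mem n a z : (a + n.+1 < size t)%N ->
  T a <= z <= T (a + n.+1) -> T a < T (a + n.+1) ->
  exists m, [/\ (a <= m)%N, (m <= a + n)%N, T m <= z <= T m.+1 & T m < T m.+1].
Proof.
elim: n a => [|n IH] a ha hz hlt.
  by exists a; rewrite addn1 in hz hlt; split => //; lia.
have hle1 : T a.+1 <= T (a + n.+2) by apply: (clamped_nth_le ht); lia.
case/andP: hz => hz1 hz2.
case: (ltP z (T a.+1)) => hza.
  exists a; split; [lia | lia | by rewrite hz1 (ltW hza) | exact: le_lt_trans hza].
case: (ltP (T a.+1) (T (a + n.+2))) => h2.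
  have [|||m [h3 h4 h5 h6]] := IH a.+1; rewrite ?addSnnS ?hza //.
  by exists m; split => //; lia.
have e : T a.+1 = T (a + n.+2) by apply/le_anti; rewrite hle1.
by exists a; split; [lia | lia | rewrite hz1 e | rewrite e].
Qed.

Lemma span_unique c m z : (c.+1 < size t)%N -> (m.+1 < size t)%N ->
  T c <= z <= T c.+1 -> T m < z < T m.+1 -> c = m.
Proof.
move=> hc hm /andP[h1 h2] /andP[h3 h4].
case: (ltngtP c m) => // hcm; exfalso.
  have := clamped_nth_le ht hcm (ltnW hm) => h.
  by have := lt_le_trans h3 h2; rewrite ltNge h.
have := clamped_nth_le ht hcm (ltnW hc) => h.
by have := lt_le_trans h4 (le_trans h h1); rewrite ltxx.
Qed.

Lemma span_at0_unique c m : (c.+1 < size t)%N -> (m.+1 < size t)%N ->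
  T c <= 0 <= T c.+1 -> T c < T c.+1 -> T m <= 0 < T m.+1 -> c = m.
Proof.
move=> hc hm /andP[h1 h2] hlt /andP[h3 h4].
case: (ltngtP c m) => // hcm; exfalso.
  have := clamped_nth_le ht hcm (ltnW hm) => h.
  by have := lt_le_trans hlt (le_trans h h3); rewrite ltNge (clamped_nth_ge0 ht).
have := clamped_nth_le ht hcm (ltnW hc) => h.
by have := lt_le_trans h4 (le_trans h h1); rewrite ltxx.
Qed.

Lemma span_at1_unique c m : (c.+1 < size t)%N -> (m.+1 < size t)%N ->
  T c <= 1 <= T c.+1 -> T c < T c.+1 -> T m < T m.+1 -> T m.+1 = 1 -> c = m.
Proof.
move=> hc hm /andP[h1 h2] hlt h3 h4.
case: (ltngtP c m) => // hcm; exfalso.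
  have := clamped_nth_le ht hcm (ltnW hm); rewrite h4 in h3 => h.
  by have := le_lt_trans (le_trans h2 h) h3; rewrite ltxx.
have := clamped_nth_le ht hcm (ltnW hc); rewrite h4 => h.
by have := lt_le_trans (le_lt_trans h hlt) (clamped_nth_le1 ht _); rewrite ltxx.
Qed.

(* Clamping: at 0 only the first B-spline is nonzero, at 1 only the last. *)
Lemma bspline_boundary_span j v : v = 0 \/ v = 1 -> (j + p.+1 < size t)%N ->
  bspline t p j v != 0 ->
  exists m, [/\ forall c, (c.+1 < size t)%N -> T c <= v <= T c.+1 -> T c < T c.+1 -> c = m,
    T m <= T j, T (j + p.+1) <= T m.+1
  & forall j', (j' + p.+1 < size t)%N -> bspline t p j' v != 0 -> j' = j].
Proof.
move=> [->|->] hj hb.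
- have /andP[h1 h2] := bspline_neq0_at0 ht hj hb.
  have hm : ((j + p).+1 < size t)%N by rewrite -addnS.
  exists (j + p)%N; split.
  + by move=> c hc hcv hcn; apply: (span_at0_unique hc hm hcv hcn); rewrite h1 h2.
  + exact: le_trans h1 (clamped_nth_ge0 ht _).
  + by rewrite addnS.
  + move=> j' hj' hb'; have /andP[g1 g2] := bspline_neq0_at0 ht hj' hb'.
    have hj'' : ((j' + p).+1 < size t)%N by rewrite -addnS.
    apply/(@addIn p)/(span_at0_unique hj'' hm); rewrite ?g1 ?h1 ?h2 ?(ltW g2) //.
    exact: le_lt_trans g2.
- have [h1 h2] := bspline_neq0_at1 ht hj hb.
  have hm : (j.+1 < size t)%N by apply: leq_ltn_trans hj; rewrite addnS ltnS leq_addr.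
  exists j; split => //.
  + by move=> c hc hcv hcn; apply: (span_at1_unique hc hm hcv hcn).
  + by rewrite h2 (clamped_nth_le1 ht).
  + move=> j' hj' hb'; have [g1 g2] := bspline_neq0_at1 ht hj' hb'.
    have hj'' : (j'.+1 < size t)%N by apply: leq_ltn_trans hj'; rewrite addnS ltnS leq_addr.
    by apply: (span_at1_unique hj'' hm _ g1 h1 h2); rewrite g2 lexx (clamped_nth_le1 ht).
Qed.

End Spans.

Section Hierarchical.
Variable R : realFieldType.
Variables (d : nat) (p : 'I_d -> nat) (K0 : 'I_d -> seq R).
Variable Om : nat -> ('I_d -> R) -> Prop.
Hypothesis hK : forall k i, clamped (p i) (Kk K0 k i).
Hypothesis hmesh : hier_mesh K0 Om.

Local Notation B := (beta K0 p).
Local Notation inH := (in_H K0 p Om).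
Local Notation T k i j := (nth 0 (Kk K0 k i) j).

Lemma Om_le k k' x : (k <= k')%N -> Om k' x -> Om k x.
Proof.
case: hmesh => _ hn _ _ /subnK <-; elim: (k' - k)%N => [|n IH] //.
by rewrite addSn => /hn.
Qed.

Lemma beta_neq0_Om a w k : inH a -> (k < a.1)%N -> B a w != 0 -> Om k.+1 w.
Proof.
case=> _ hs _ hk hb; apply: (@Om_le _ a.1) => //; apply: hs => e he.
by exists w; split => // i; rewrite subrr normr0.
Qed.

Lemma beta_neq0_factor a y i :
  B a y != 0 -> bspline (Kk K0 a.1 i) (p i) (a.2 i) (y i) != 0.
Proof. by apply: contraNneq => h0; apply/prodf_eq0; exists i => //; rewrite h0. Qed.

Lemma beta_partial_enum a w :
  B a w = partial_tbspline (Kk K0 a.1) p (enum 'I_d) a.2 w.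
Proof. by rewrite /beta /tbspline /partial_tbspline big_enum. Qed.

Lemma beta_face a i0 v w :
  B a (fun i => if i == i0 then v else w i) =
  bspline (Kk K0 a.1 i0) (p i0) (a.2 i0) v *
    partial_tbspline (Kk K0 a.1) p [seq i <- enum 'I_d | i != i0] a.2 w.
Proof.
rewrite /beta /tbspline (bigD1 i0) //= eqxx /partial_tbspline big_filter big_enum_cond.
by congr (_ * _); apply: eq_bigr => i hi; rewrite (negbTE hi).
Qed.

Lemma in_H_index a i : inH a -> (a.2 i + (p i).+1 < size (Kk K0 a.1 i))%N.
Proof. by case=> /(_ i); rewrite /nbs; move: (size _) => n; lia. Qed.

Lemma in_supp_beta a x : inH a -> in_supp (B a) x -> forall i,
  [/\ T a.1 i (a.2 i) <= x i, x i <= T a.1 i (a.2 i + (p i).+1)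
    & T a.1 i (a.2 i) < T a.1 i (a.2 i + (p i).+1)].
Proof.
move=> ha hs i; have hr := in_H_index i ha.
have supp e : 0 < e -> exists y, `|y - x i| < e /\
    [/\ T a.1 i (a.2 i) <= y, y <= T a.1 i (a.2 i + (p i).+1)
      & T a.1 i (a.2 i) < T a.1 i (a.2 i + (p i).+1)].
  move=> /hs [y [hyx /(beta_neq0_factor i) hy]].
  by exists (y i); split => //; apply: bspline_support hy.
have [_ [_ [_ _ hlt]]] := supp 1 ltr01; split => //; rewrite leNgt; apply/negP => hx.
  have [y [hyx [h1 _ _]]] := supp (T a.1 i (a.2 i) - x i) ltac:(by rewrite subr_gt0).
  by move: hyx; rewrite ltr_norml; lra.
have [y [hyx [_ h1 _]]] := supp (x i - T a.1 i (a.2 i + (p i).+1)) ltac:(by rewrite subr_gt0).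
by move: hyx; rewrite ltr_norml; lra.
Qed.

Lemma in_H_witness a : inH a -> exists z, in_supp (B a) z /\ ~ Om a.1.+1 z.
Proof.
case=> _ _ h3; apply: NNPP => H; apply: h3 => x hx.
by apply: NNPP => hn; apply: H; exists x.
Qed.

Lemma in_supp_span a z : inH a -> in_supp (B a) z -> exists m : 'I_d -> nat,
  forall i, [/\ ((m i).+1 < size (Kk K0 a.1 i))%N, T a.1 i (m i) < T a.1 i (m i).+1,
    (a.2 i <= m i)%N, (m i <= a.2 i + p i)%N & T a.1 i (m i) <= z i <= T a.1 i (m i).+1].
Proof.
move=> ha hz; have /fin_all_exists [m hm] : forall i, exists mi,
    [/\ (a.2 i <= mi)%N, (mi <= a.2 i + p i)%N,
        T a.1 i mi <= z i <= T a.1 i mi.+1 & T a.1 i mi < T a.1 i mi.+1].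
  move=> i; have [h1 h2 h3] := in_supp_beta ha hz i.
  by apply: (exists_span_mem (hK a.1 i)); rewrite ?h1 ?h2 ?in_H_index.
exists m => i; have [h1 h2 h3 h4] := hm i; split => //.
by have := in_H_index i ha; lia.
Qed.

Lemma notin_Om_cell k (z w : 'I_d -> R) (m : 'I_d -> nat) :
  ~ Om k.+1 z -> (forall i, T k i (m i) <= z i <= T k i (m i).+1) ->
  (forall c, is_cell (Kk K0 k) c -> in_cell (Kk K0 k) c w -> forall i, c i = m i) ->
  ~ Om k.+1 w.
Proof.
move=> hz hzm hcm hw; apply: hz; case: hmesh => _ _ /(_ k) [S [hSc hSe]] _.
have [c [hcS hcw]] := (hSe w).1 hw.
by apply/(hSe z).2; exists c; split => // i; rewrite (hcm c (hSc c hcS) hcw).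
Qed.

Lemma open_cell_notin_Om a : inH a -> exists m : 'I_d -> nat,
  (forall i, [/\ ((m i).+1 < size (Kk K0 a.1 i))%N, T a.1 i (m i) < T a.1 i (m i).+1,
     (a.2 i <= m i)%N & (m i <= a.2 i + p i)%N]) /\
  (forall w : 'I_d -> R, (forall i, T a.1 i (m i) < w i < T a.1 i (m i).+1) -> ~ Om a.1.+1 w).
Proof.
move=> ha; have [z [hz hnz]] := in_H_witness ha; have [m hm] := in_supp_span ha hz.
exists m; split => [i|w hw]; first by have [] := hm i.
apply: (@notin_Om_cell _ z w m hnz) => [i|c hc hcw i]; first by have [] := hm i.
have [[hc1 _] [hm1 _ _ _ _]] := (hc i, hm i).
exact (span_unique (hK a.1 i) hc1 hm1 (hcw i) (hw i)).
Qed.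

Lemma face_cell_notin_Om a i0 v m0 : inH a ->
  (forall c, (c.+1 < size (Kk K0 a.1 i0))%N -> T a.1 i0 c <= v <= T a.1 i0 c.+1 ->
     T a.1 i0 c < T a.1 i0 c.+1 -> c = m0) ->
  (forall z, in_supp (B a) z -> T a.1 i0 m0 <= z i0 <= T a.1 i0 m0.+1) ->
  exists m : 'I_d -> nat,
  (forall i, [/\ ((m i).+1 < size (Kk K0 a.1 i))%N, T a.1 i (m i) < T a.1 i (m i).+1,
     (a.2 i <= m i)%N & (m i <= a.2 i + p i)%N]) /\
  (forall w : 'I_d -> R, w i0 = v ->
     (forall i, i != i0 -> T a.1 i (m i) < w i < T a.1 i (m i).+1) -> ~ Om a.1.+1 w).
Proof.
move=> ha hu hz0; have [z [hz hnz]] := in_H_witness ha; have [m hm] := in_supp_span ha hz.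
exists m; split => [i|w hwv hw]; first by have [] := hm i.
pose m' i := if i == i0 then m0 else m i.
apply: (@notin_Om_cell _ z w m' hnz) => [i|c hc hcw i]; rewrite /m'.
  by case: eqP => [->|_]; [exact: hz0 | have [] := hm i].
case: (eqVneq i i0) => [->|hi].
  have [hc1 hc2] := hc i0; apply: (hu _ hc1 _ hc2).
  by rewrite -hwv; apply: hcw.
have [[hc1 _] [hm1 _ _ _ _]] := (hc i, hm i).
exact (span_unique (hK a.1 i) hc1 hm1 (hcw i) (hw i hi)).
Qed.

Lemma unit_cube_open_cell k (m : 'I_d -> nat) (w : 'I_d -> R) (L : seq 'I_d) (v : R) :
  (forall i, i \in L -> T k i (m i) < w i < T k i (m i).+1) ->
  (forall i, i \notin L -> w i = v) -> 0 <= v <= 1 -> unit_cube w.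
Proof.
move=> hw hv hv01 i; case: (boolP (i \in L)) => hi; last by rewrite hv.
case/andP: (hw i hi) => h1 h2; apply/andP; split.
  exact: le_trans (clamped_nth_ge0 (hK k i) _) (ltW h1).
exact: le_trans (ltW h2) (clamped_nth_le1 (hK k i) _).
Qed.

Lemma lin_comb_level (s : seq (idx d)) (c : idx d -> R) k w :
  (forall b, b \in s -> (b.1 < k)%N -> coef_of s c b = 0 \/ B b w = 0) ->
  (forall b, b \in s -> (k < b.1)%N -> B b w = 0) ->
  lin_comb s c B w = \sum_(b <- s | b.1 == k) c b * B b w.
Proof.
move=> hlo hhi; rewrite /lin_comb (bigID (fun b : idx d => b.1 == k)) /=.
rewrite [X in _ + X](bigID (fun b : idx d => (b.1 < k)%N)) /=.
rewrite [X in _ + (_ + X)]big1_seq => [|b /andP[/andP[h1 h2] hb]]; last first.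
  by rewrite hhi ?mulr0 //; move: h1 h2; rewrite neq_ltn ltnNge => /orP[->|].
rewrite [X in _ + (X + _)]big_undup_coef [X in _ + (X + _)]big1_seq /= ?addr0 //.
move=> b /andP[/andP[_ hlt] hb]; rewrite mem_undup in hb.
by case: (hlo b hb hlt) => ->; rewrite ?mul0r ?mulr0.
Qed.

Lemma seq_level_ind (s : seq (idx d)) (Q : idx d -> Prop) (f : idx d -> R) :
  (forall a, a \in s -> Q a ->
     (forall b, b \in s -> (b.1 < a.1)%N -> Q b -> f b = 0) -> f a = 0) ->
  forall a, a \in s -> Q a -> f a = 0.
Proof.
move=> H a; elim: a.1.+1 {-2}a (ltnSn a.1) => {a} [|n IH] a // ha sa Qa.
by apply: H => // b sb hb; apply: IH => //; exact: leq_trans hb ha.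
Qed.

Lemma idx_eq (a b : idx d) : b.1 = a.1 -> (forall i, b.2 i = a.2 i) -> b = a.
Proof.
by case: a b => [k j] [k' j'] /= -> hj; congr pair; apply/ffunP.
Qed.

Lemma not_vanish_bdry_witness (f : ('I_d -> R) -> R) :
  ~ vanish_bdry f -> exists x, on_boundary x /\ f x != 0.
Proof.
move=> hf; apply: NNPP => H; apply: hf => x hx.
by apply: NNPP => hn; apply: H; exists x; split => //; apply/eqP.
Qed.

Lemma level_coef_eq0 k (m : 'I_d -> nat) (L : seq 'I_d) (s : seq (idx d))
    (c G : idx d -> R) (a : idx d) :
  uniq L -> a.1 = k ->
  (forall i, [/\ ((m i).+1 < size (Kk K0 k i))%N, T k i (m i) < T k i (m i).+1,
     (a.2 i <= m i)%N & (m i <= a.2 i + p i)%N]) ->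
  (forall w, in_open_cell (Kk K0 k) L m w ->
     \sum_(b <- [seq b <- s | b.1 == k]) (c b * G b) * partial_tbspline (Kk K0 k) p L b.2 w
     = 0) ->
  (forall b, b \in s -> b.1 = k -> (forall i, i \in L -> b.2 i = a.2 i) -> G b != 0 ->
     b = a) ->
  coef_of s c a * G a = 0.
Proof.
move=> uL hak hm hlev huniq.
have hmL i : i \in L -> ((m i).+1 < size (Kk K0 k i))%N /\ T k i (m i) < T k i (m i).+1.
  by have [] := hm i.
have hmL' i : i \in L -> (a.2 i <= m i)%N /\ (m i <= a.2 i + p i)%N by have [] := hm i.
have := tensor_local_lin_indep (hK k) uL hmL hlev hmL'.
rewrite big_filter_cond (big_cond_coef_of _ (a := a)) // => [|b hb /andP[/eqP hbk /allP hbj]].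
  by rewrite hak eqxx; apply/allP.
by apply: huniq => // i /hbj /eqP.
Qed.

Lemma in_H_coef_eq0 (s : seq (idx d)) (c : idx d -> R) :
  (forall a, a \in s -> inH a) -> (forall x, unit_cube x -> lin_comb s c B x = 0) ->
  forall a, a \in s -> coef_of s c a = 0.
Proof.
move=> hs hV a ha; apply: (@seq_level_ind s (fun _ => True)) => // {}a {}ha _ IH.
set k := a.1; have [m [hm hOm]] := open_cell_notin_Om (hs a ha).
rewrite -[coef_of s c a]mulr1.
apply: (level_coef_eq0 (L := enum 'I_d) (G := fun=> 1) (enum_uniq _) erefl hm).
  move=> w hw; have hw' i : T k i (m i) < w i < T k i (m i).+1 by apply: hw; rewrite mem_enum.
  have hnO := hOm w hw'.
  rewrite -[RHS](hV w); last first.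
    apply: (unit_cube_open_cell (L := enum 'I_d) (v := 0)) => [i _|i|]; first exact: hw'.
      by rewrite mem_enum.
    by rewrite lexx ler01.
  rewrite (lin_comb_level (k := k)) => [|b hb hlt|b hb hlt]; last 2 first.
  - by left; apply: IH.
  - by apply/eqP; apply: contraT => hnz; case: hnO; exact: beta_neq0_Om (hs b hb) hlt hnz.
  rewrite big_filter; apply: eq_bigr => b /eqP hb.
  by rewrite beta_partial_enum hb mulr1.
by move=> b _ hbk hbj _; apply: idx_eq => // i; apply: hbj; rewrite mem_enum.
Qed.

Lemma vanish_bdry_coef_eq0 (s : seq (idx d)) (c : idx d -> R) (V : ('I_d -> R) -> R) :
  (forall a, a \in s -> inH a) -> (forall x, unit_cube x -> V x = lin_comb s c B x) ->
  vanish_bdry V -> forall a, a \in s -> ~ vanish_bdry (B a) -> coef_of s c a = 0.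
Proof.
move=> hs hV hvan; apply: seq_level_ind => a ha hnv IH; set k := a.1.
have [x [[hxc [i0 hv01]] hx]] := not_vanish_bdry_witness hnv.
set v := x i0; have hB0 := beta_neq0_factor i0 hx.
have [m0 [hu hm0l hm0r hj]] :=
  bspline_boundary_span (hK k i0) hv01 (in_H_index i0 (hs a ha)) hB0.
have [m [hm hOm]] := face_cell_notin_Om (hs a ha) hu (v := v) (fun z hz =>
  let: And3 z1 z2 _ := in_supp_beta (hs a ha) hz i0 in
  introT andP (conj (le_trans hm0l z1) (le_trans z2 hm0r))).
pose L := [seq i <- enum 'I_d | i != i0].
pose Bv (b : idx d) := bspline (Kk K0 k i0) (p i0) (b.2 i0) v.
have level_k w : in_open_cell (Kk K0 k) L m w ->
    \sum_(b <- [seq b <- s | b.1 == k])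
      (c b * Bv b) * partial_tbspline (Kk K0 k) p L b.2 w = 0.
  move=> hw; pose w' i := if i == i0 then v else w i.
  have hw' i : i != i0 -> T k i (m i) < w' i < T k i (m i).+1.
    by move=> hi; rewrite /w' (negbTE hi); apply: hw; rewrite mem_filter hi mem_enum.
  have hnO := hOm w' ltac:(by rewrite /w' eqxx) hw'.
  have hbd : on_boundary w'.
    split; last by exists i0; rewrite /w' eqxx.
    apply: (unit_cube_open_cell (L := L) (v := v)) (hxc i0) => [i|i].
      by rewrite mem_filter => /andP[hi _]; exact: hw' i hi.
    by rewrite mem_filter mem_enum andbT negbK => /eqP ->; rewrite /w' eqxx.
  rewrite -[RHS](hvan w' hbd) (hV w' hbd.1) (lin_comb_level (k := k)).
  - by rewrite big_filter; apply: eq_bigr => b /eqP hb; rewrite /w' beta_face hb mulrA.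
  - move=> b hb hlt; have [hvb|hvb] := classic (vanish_bdry (B b)).
      by right; exact: hvb _ hbd.
    by left; exact: IH b hb hlt hvb.
  - move=> b hb hlt; apply/eqP; apply: contraT => hnz; case: hnO.
    exact: beta_neq0_Om (hs b hb) hlt hnz.
suff /eqP : coef_of s c a * Bv a = 0 by rewrite mulf_eq0 (negbTE hB0) orbF => /eqP.
apply: (level_coef_eq0 (filter_uniq _ (enum_uniq _)) erefl hm level_k).
move=> b hb hbk hbj hbv; apply: idx_eq => // i.
case: (eqVneq i i0) => [->|hi]; last by apply: hbj; rewrite mem_filter hi mem_enum.
by apply: hj hbv; have := in_H_index i0 (hs b hb); rewrite hbk.
Qed.

Lemma in_H_lin_indep : lin_indep inH B.
Proof.
move=> s c us hs hz a ha; rewrite -(coef_of_uniq c us ha).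
exact: in_H_coef_eq0 hs hz a ha.
Qed.

Lemma in_span_vanish_bdry V : in_span inH B V -> vanish_bdry V ->
  in_span (fun a => inH a /\ vanish_bdry (B a)) B V.
Proof.
case=> s [c [hs hVs]] hvan.
pose vb a := if excluded_middle_informative (vanish_bdry (B a)) then true else false.
have vbP a : reflect (vanish_bdry (B a)) (vb a).
  by rewrite /vb; case: excluded_middle_informative => h; constructor.
exists [seq a <- undup s | vb a], (coef_of s c); split.
  by move=> a; rewrite mem_filter mem_undup => /andP[/vbP hv /hs].
move=> x hx; rewrite hVs // /lin_comb big_filter (big_undup_coef _ xpredT) (bigID vb) /=.
rewrite [X in _ + X]big1_seq ?addr0 // => a /andP[/vbP hnv]; rewrite mem_undup => ha.
by rewrite (vanish_bdry_coef_eq0 hs hVs hvan ha hnv) mul0r.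
Qed.

End Hierarchical.

Theorem corollary3p2 (R : realFieldType) (d : nat) (p N0 : 'I_d -> nat)
    (K0 : 'I_d -> seq R) (Om : nat -> ('I_d -> R) -> Prop) :
  (2 <= d)%N ->
  (forall i, (1 <= p i)%N) ->
  (forall i, open_knot_vector (p i) (N0 i) (K0 i)) ->
  hier_mesh K0 Om ->
  is_basis_of (fun a => in_H K0 p Om a /\ vanish_bdry (beta K0 p a)) (beta K0 p)
    (fun V => in_span (in_H K0 p Om) (beta K0 p) V /\ vanish_bdry V).
Proof.
move=> _ _ hokv hmesh.
have hK k i : clamped (p i) (Kk K0 k i).
  exact: iter_refine_knots_clamped (open_knot_vector_clamped (hokv i)).
split.
- move=> a [ha hva]; split => //; exists [:: a], (fun=> 1); split.
    by move=> b; rewrite inE => /eqP ->.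
  by move=> x _; rewrite /lin_comb big_seq1 mul1r.
- move=> s c us hs; exact: (in_H_lin_indep hK hmesh us (fun b hb => (hs b hb).1)).
- by move=> V [hV hvan]; exact: in_span_vanish_bdry.
Qed.
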